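(* Let $(\mathbf{X}^0,\mathbf{p})$ be a pEF1 $\{1,k\}$-payment equilibrium. If $(\mathbf{X}^0,\mathbf{p})$ is not $(2-1/k)$-pEFX, then $\min_{i\in N_L}p(X^0_i)<k$.
   Context: Fix $k>1$. Agents $N$, chores $M$, additive costs $c_i(e)\in\{1,k\}$. An allocation partitions $M$ into bundles. A payment vector assigns $p(e)>0$, $p(X)=\sum_{e\in X}p(e)$; $\alpha_{i,e}=c_i(e)/p(e)$, $\alpha_i=\min_e\alpha_{i,e}$, $\mathsf{MPB}_i=\{e:\alpha_{i,e}=\alpha_i\}$; $(\mathbf{X},\mathbf{p})$ is a $\{1,k\}$-payment equilibrium if $X_i\subseteq\mathsf{MPB}_i$ for all $i$ and $p(e)\in\{1,k\}$ for all $e$. It is pEF1 if for all $i,j$, $X_i=\emptyset$ or some $e\in X_i$ has $p(X_i\setminus\{e\})\le p(X_j)$; it is $\beta$-pEFX if for all $i,j$, $X_i=\emptyset$ or $p(X_i\setminus\{e\})\le\beta\,p(X_j)$ for all $e\in X_i$. $L=\{e:p(e)=1\}$, $N_L=\{i:X^0_i\subseteq L\}$. *)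

From mathcomp Require Import all_boot all_order all_algebra.
Set Implicit Arguments. Unset Strict Implicit. Unset Printing Implicit Defensive.
Import Order.TTheory GRing.Theory Num.Theory.
Local Open Scope ring_scope.

(* Agents: finite type A; chores: finite type C; values in a real field R. *)
Section Defs.
Variables (R : realFieldType) (A C : finType).

Definition is_allocation (X : A -> {set C}) : Prop :=
  (forall i j, i != j -> [disjoint X i & X j]) /\
  (forall e : C, exists i, e \in X i).

Definition pay (p : C -> R) (S : {set C}) : R := \sum_(e in S) p e.

Definition alpha (c : A -> C -> R) (p : C -> R) (i : A) (e : C) : R :=
  c i e / p e.

Definition in_MPB (c : A -> C -> R) (p : C -> R) (i : A) (e : C) : Prop :=
  forall e' : C, alpha c p i e <= alpha c p i e'.

Definition payment_eq_1k (k : R) (c : A -> C -> R)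
    (X : A -> {set C}) (p : C -> R) : Prop :=
  (forall i e, e \in X i -> in_MPB c p i e) /\
  (forall e, p e = 1 \/ p e = k).

Definition pEF1 (X : A -> {set C}) (p : C -> R) : Prop :=
  forall i j, X i = set0 \/
    exists2 e, e \in X i & pay p (X i :\ e) <= pay p (X j).

Definition beta_pEFX (beta : R) (X : A -> {set C}) (p : C -> R) : Prop :=
  forall i j, X i = set0 \/
    forall e, e \in X i -> pay p (X i :\ e) <= beta * pay p (X j).

Definition Lset (p : C -> R) : {set C} := [set e | p e == 1].

Definition NL (X : A -> {set C}) (p : C -> R) : {set A} :=
  [set i | X i \subset Lset p].

End Defs.

(* If removing e from X_i leaves more than (2 - 1/k) p(X_j), while pEF1 says
   removing some e' leaves at most p(X_j), then exchanging e' for e costs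
   p(e') - p(e) <= k - 1, so (1 - 1/k) p(X_j) < k - 1, i.e. p(X_j) < k.
   A bundle of payment below k contains no chore of payment k, so j lies
   in N_L. *)

From mathcomp Require Import all_boot all_order all_algebra.
From mathcomp Require Import ring lra.
Set Implicit Arguments. Unset Strict Implicit.
Unset Printing Implicit Defensive.
Import Order.TTheory GRing.Theory Num.Theory.
Local Open Scope ring_scope.

Section Payments.
Variables (R : realFieldType) (C : finType) (p : C -> R).

Lemma pay_setD1 (S : {set C}) (e : C) :
  e \in S -> pay p S = p e + pay p (S :\ e).
Proof. by move=> eS; rewrite /pay (big_setD1 e eS). Qed.

Lemma pay_ge0 (S : {set C}) : (forall e, 0 <= p e) -> 0 <= pay p S.
Proof. by move=> p_ge0; apply: sumr_ge0 => e _. Qed.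

Lemma pay_setD1_exchange (S : {set C}) (e e' : C) :
  e \in S -> e' \in S -> pay p (S :\ e) = pay p (S :\ e') + p e' - p e.
Proof.
by move=> eS e'S; have := pay_setD1 eS; rewrite (pay_setD1 e'S); lra.
Qed.

Variable k : R.
Hypothesis p_1k : forall e, p e = 1 \/ p e = k.

Lemma subset_Lset_pay_lt (S : {set C}) :
  1 < k -> pay p S < k -> S \subset Lset p.
Proof.
move=> k_gt1 paySk; apply/subsetP => e eS; rewrite inE.
case: (p_1k e) => [-> // | pe_k].
have p_ge0 e' : 0 <= p e' by case: (p_1k e') => ->; lra.
have := pay_ge0 (S :\ e) p_ge0; have := pay_setD1 eS; lra.
Qed.

End Payments.

Lemma mul_2_subV_lt_addB1 (R : realFieldType) (k q : R) :
  1 < k -> ((2 - k^-1) * q < q + (k - 1)) = (q < k).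
Proof.
move=> k_gt1; have k_gt0 : 0 < k by lra.
rewrite -(ltr_pM2l k_gt0) mulrA mulrBr mulfV ?gt_eqF //.
have -> : (k * 2 - 1) * q < k * (q + (k - 1)) = ((k - 1) * q < (k - 1) * k).
  by rewrite -subr_gt0 -[RHS]subr_gt0; congr (0 < _); ring.
by rewrite ltr_pM2l // subr_gt0.
Qed.

Lemma not_beta_pEFXP (R : realFieldType) (A C : finType) (beta : R)
    (X : A -> {set C}) (p : C -> R) :
  ~ beta_pEFX beta X p ->
  exists i j e, e \in X i /\ beta * pay p (X j) < pay p (X i :\ e).
Proof.
move=> notEFX.
have [/existsP [i /existsP [j /existsP [e /andP [eXi lt_ij]]]] | none] :=
  boolP [exists i, exists j, exists e,
           (e \in X i) && (beta * pay p (X j) < pay p (X i :\ e))].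
  by exists i, j, e.
exfalso; apply: notEFX => i j; right => e eXi; rewrite leNgt.
apply: contra none => lt_ij.
by apply/existsP; exists i; apply/existsP; exists j; apply/existsP; exists e;
  rewrite eXi.
Qed.

Lemma pEF1_pEFX_violation_pay_lt (R : realFieldType) (A C : finType) (k : R)
    (X : A -> {set C}) (p : C -> R) (i j : A) (e : C) :
  1 < k -> (forall e, 1 <= p e <= k) -> pEF1 X p ->
  e \in X i -> (2 - k^-1) * pay p (X j) < pay p (X i :\ e) ->
  pay p (X j) < k.
Proof.
move=> k_gt1 p_range EF1 eXi gap.
have [Xi0 | [e' e'Xi EF1_ij]] := EF1 i j; first by rewrite Xi0 inE in eXi.
rewrite -(mul_2_subV_lt_addB1 _ k_gt1).
have /andP [pe_ge1 _] := p_range e; have /andP [_ pe'_le] := p_range e'.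
have := pay_setD1_exchange p eXi e'Xi; lra.
Qed.

Theorem lemma8 (R : realFieldType) (A C : finType) (k : R)
  (c : A -> C -> R) (X : A -> {set C}) (p : C -> R) :
  1 < k ->
  (forall i e, c i e = 1 \/ c i e = k) ->
  is_allocation X ->
  payment_eq_1k k c X p ->
  pEF1 X p ->
  ~ beta_pEFX (2 - k^-1) X p ->
  exists2 i, i \in NL X p & pay p (X i) < k.
Proof.
move=> k_gt1 _ _ [_ p_1k] EF1 /not_beta_pEFXP [i [j [e [eXi gap]]]].
have p_range x : 1 <= p x <= k by case: (p_1k x) => ->; rewrite lexx ?(ltW k_gt1).
have payXj_lt :=
  pEF1_pEFX_violation_pay_lt k_gt1 p_range EF1 eXi gap.
by exists j; rewrite // inE (subset_Lset_pay_lt p_1k).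
Qed.
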